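(* Let $n\ge1$, $m\ge0$ and let $v,u$ be vertices of the Yoke graph $Y_{n,m}$. Then $d_{Y_{n,m}}(v,u)=d_{Z_{n,m}}(v-u,0)$, where $v-u=(v_0-u_0,\dots,v_{m+1}-u_{m+1})$ (differences in coordinates $0,m+1$ taken in $\mathbb{Z}_n$, in coordinates $1,\dots,m$ in $\mathbb{Z}$), which is a vertex of $Z_{n,m}$, and $d_G$ denotes graph distance in $G$.
   Context: Elements of $\mathbb{Z}_n$ are identified with representatives in $\{0,\dots,n-1\}$. For $S\subseteq\mathbb{Z}$, consider vertices $u=(u_0,\dots,u_{m+1})\in\mathbb{Z}_n\times S^m\times\mathbb{Z}_n$ with $\sum u_i\equiv0\pmod n$; $u,v$ adjacent if there is $0\leq i\leq m$ with $u_j=v_j$ for $j\notin\{i,i+1\}$ and either ($u_i=v_i+1$, $u_{i+1}=v_{i+1}-1$) or ($u_i=v_i-1$, $u_{i+1}=v_{i+1}+1$), arithmetic in coordinates $0,m+1$ being in $\mathbb{Z}_n$ and in coordinates $1,\dots,m$ in $\mathbb{Z}$. $Y_{n,m}$ is the case $S=\{0,1\}$ and $Z_{n,m}$ the case $S=\{-1,0,1\}$. $0$ is the all-zero vertex. *)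

From mathcomp Require Import all_boot all_order all_algebra.
Set Implicit Arguments. Unset Strict Implicit. Unset Printing Implicit Defensive.
Import Order.TTheory GRing.Theory Num.Theory.
Local Open Scope ring_scope.

(* Vertices are sequences u = [u_0; ...; u_(m+1)] of integers.
   Coordinates 0 and m+1 are elements of Z_n, represented by their
   representative in {0,...,n-1}; coordinates 1..m lie in S. *)

Definition is_end (m j : nat) : bool := (j == 0)%N || (j == m.+1)%N.

Definition coord_eq (n m j : nat) (a b : int) : bool :=
  if is_end m j then ((a - b) %% n%:Z)%Z == 0 else a == b.

Definition vertex (S : int -> bool) (n m : nat) (u : seq int) : bool :=
  [&& size u == m.+2,
      all (fun j => if is_end m j then (0 <= u`_j) && (u`_j < n%:Z) else S u`_j)
          (iota 0 m.+2)
    & ((\sum_(j < m.+2) u`_j) %% n%:Z)%Z == 0].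

Definition adj (S : int -> bool) (n m : nat) (u v : seq int) : Prop :=
  [/\ vertex S n m u, vertex S n m v &
  exists i : nat, (i <= m)%N /\
    (forall j, (j < m.+2)%N -> j != i -> j != i.+1 -> u`_j = v`_j) /\
    exists e : int, (e = 1 \/ e = -1) /\
      coord_eq n m i u`_i (v`_i + e) /\
      coord_eq n m i.+1 u`_(i.+1) (v`_(i.+1) - e)].

Definition SY : int -> bool := fun a => (0 <= a) && (a <= 1).
Definition SZ : int -> bool := fun a => (-1 <= a) && (a <= 1).

Definition Yadj (n m : nat) := adj SY n m.
Definition Zadj (n m : nat) := adj SZ n m.

Fixpoint walk (R : seq int -> seq int -> Prop) (k : nat) (x y : seq int) : Prop :=
  match k with
  | 0 => x = y
  | k'.+1 => exists z, R x z /\ walk R k' z y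
  end.

(* d is the graph distance from x to y (no such d if unreachable) *)
Definition is_dist (R : seq int -> seq int -> Prop) (x y : seq int) (d : nat) : Prop :=
  walk R d x y /\ forall k, walk R k x y -> (d <= k)%N.

Definition vsub (n m : nat) (v u : seq int) : seq int :=
  [seq (if is_end m j then ((v`_j - u`_j) %% n%:Z)%Z else v`_j - u`_j) | j <- iota 0 m.+2].

Definition zero_vertex (m : nat) : seq int := nseq m.+2 0.

From mathcomp Require Import all_boot all_order all_algebra.
From mathcomp Require Import zify ring.
Import Order.TTheory GRing.Theory Num.Theory.
Set Implicit Arguments. Unset Strict Implicit. Unset Printing Implicit Defensive.
Local Open Scope ring_scope.

(* Translating by u maps Y-walks from v to u onto Z-walks from v - u to 0,
   so d_Z(v - u, 0) <= d_Y(v, u).  For the converse, give a vertex w an integer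
   lift t of w_0 and consider the flows F_l = t + w_1 + ... + w_l (0 <= l <= m)
   and the cost sum_l |F_l|.  A move across the edge (i, i+1) changes only F_i,
   by +-1 (shifting t when i = 0), so a Z-walk of length k from w to 0 yields a
   lift of w of cost at most k.  Conversely, if the lift of v - u has positive
   cost, the 0/1 middle coordinates of v always allow a Y-move of v that lowers
   the cost: around a position with F_i > 0 there is a site with v_i = 1 (or
   i = 0) and v_(i+1) = 0 (or i = m), and symmetrically where F_i < 0.  Hence
   d_Y(v, u) <= cost <= d_Z(v - u, 0). *)

Lemma modz_sub_eq0 (a b d : int) : (((a - b) %% d == 0) = (a == b %[mod d]))%Z.
Proof. by rewrite eqz_mod_dvd; apply/eqP/dvdz_mod0P. Qed.

Lemma modz_sum (I : Type) (r : seq I) (P : pred I) (F G : I -> int) (d : int) :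
  (forall i, P i -> (F i = G i %[mod d])%Z) ->
  (\sum_(i <- r | P i) F i = \sum_(i <- r | P i) G i %[mod d])%Z.
Proof.
move=> FG; apply: (big_ind2 (fun x y => x = y %[mod d])%Z) => // x1 x2 y1 y2 e1 e2.
by rewrite -modzDm e1 e2 modzDm.
Qed.

Lemma sum_if_eq N k (e : int) :
  (k < N)%N -> \sum_(j < N) (if (j : nat) == k then e else 0) = e.
Proof.
move=> kN; rewrite (bigD1 (Ordinal kN)) //= eqxx big1 ?addr0 // => j /negPf.
by rewrite -val_eqE /= => ->.
Qed.

Definition delta (i : nat) (e : int) (j : nat) : int :=
  (if j == i then e else 0) - (if j == i.+1 then e else 0).

Lemma sum_delta N i e : (i.+1 < N)%N -> \sum_(j < N) delta i e j = 0.
Proof. by move=> iN; rewrite sumrB !sum_if_eq ?subrr // ltnW. Qed.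

Lemma deltaN i e j : delta i (- e) j = - delta i e j.
Proof. by rewrite /delta; case: (j == i); case: (j == i.+1) => /=; ring. Qed.

Definition flow (w : seq int) (t : int) (l : nat) : int := t + \sum_(1 <= j < l.+1) w`_j.

Lemma flow0 w t : flow w t 0 = t.
Proof. by rewrite /flow big_geq ?addr0. Qed.

Lemma flowS w t l : flow w t l.+1 = flow w t l + w`_l.+1.
Proof. by rewrite /flow big_nat_recr //= addrA. Qed.

(* Applied with x, y the middle coordinates of v, u and F their flow: the site
   found is where a unit of v can be moved from i to i + 1, lowering F_i. *)
Section Descent.
Variables (m : nat) (x y F : nat -> int).
Hypothesis x01 : forall j, (0 < j <= m)%N -> x j = 0 \/ x j = 1.
Hypothesis y01 : forall j, (0 < j <= m)%N -> 0 <= y j <= 1.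
Hypothesis FS : forall l, (l < m)%N -> F l.+1 = F l + (x l.+1 - y l.+1).

Lemma descent_left l : (l <= m)%N -> 0 < F l ->
  exists2 i, (i <= m)%N & 0 < F i /\ (i = 0%N \/ x i = 1).
Proof.
elim: l => [|l IH] lm Fl; first by exists 0%N => //; split=> //; left.
have lm1 : (0 < l.+1 <= m)%N by lia.
have [x0 | x1] := x01 lm1; last by exists l.+1 => //; split=> //; right.
by apply: IH; [exact: ltnW | have := FS lm; have := y01 lm1; lia].
Qed.

Lemma descent_right i : (i <= m)%N -> 0 < F i -> (i = 0%N \/ x i = 1) ->
  exists j, [/\ (j <= m)%N, 0 < F j, j = 0%N \/ x j = 1 & j = m \/ x j.+1 = 0].
Proof.
move mi: (m - i)%N => k; elim: k i mi => [|k IH] i mi im Fi left_i.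
  by exists i; split=> //; left; lia.
have im1 : (0 < i.+1 <= m)%N by lia.
have [x0 | x1] := x01 im1; first by exists i; split=> //; right.
apply: (IH i.+1); [lia | lia | | by right].
by have := FS im1; have := y01 im1; lia.
Qed.

Lemma exists_descent l : (l <= m)%N -> 0 < F l ->
  exists i, [/\ (i <= m)%N, 0 < F i, i = 0%N \/ x i = 1 & i = m \/ x i.+1 = 0].
Proof.
by move=> lm /(descent_left lm)[i im [Fi left_i]]; exact: (descent_right im Fi left_i).
Qed.

End Descent.

Lemma is_endF m j : (0 < j <= m)%N -> is_end m j = false.
Proof. by rewrite /is_end => /andP[j_gt0 jm]; rewrite gtn_eqF // ltn_eqF. Qed.

Section Yoke.
Variables n m : nat.

Definition reduce (j : nat) (a : int) : int := if is_end m j then (a %% n)%Z else a.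

Lemma reduce_mod j a : (reduce j a = a %[mod n])%Z.
Proof. by rewrite /reduce; case: (is_end m j) => //; exact: modz_mod. Qed.

Lemma reduceDl j a b : reduce j (reduce j a + b) = reduce j (a + b).
Proof. by rewrite /reduce; case: (is_end m j) => //; exact: modzDml. Qed.

Lemma reduce_idem j a : reduce j (reduce j a) = reduce j a.
Proof. by rewrite /reduce; case: (is_end m j) => //; exact: modz_mod. Qed.

Lemma coord_eqE j a b : coord_eq n m j a b = (reduce j a == reduce j b).
Proof. by rewrite /coord_eq /reduce; case: ifP => // _; exact: modz_sub_eq0. Qed.

Lemma vertexP S u : vertex S n m u <->
  [/\ size u = m.+2,
      forall j, (j < m.+2)%N -> if is_end m j then 0 <= u`_j < n%:Z else S u`_j
    & (\sum_(j < m.+2) u`_j = 0 %[mod n])%Z].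
Proof.
rewrite /vertex mod0z; split.
  case/and3P=> /eqP -> /allP u_coord /eqP ->; split=> // j jm.
  by apply: u_coord; rewrite mem_iota.
case=> -> u_coord ->; rewrite !eqxx andbT.
by apply/allP=> j; rewrite mem_iota => /andP[_ /u_coord].
Qed.

Lemma vertex_reduce S u j : vertex S n m u -> (j < m.+2)%N -> reduce j u`_j = u`_j.
Proof.
case/vertexP=> _ u_coord _ /u_coord; rewrite /reduce.
by case: ifP => // _; exact: modz_small.
Qed.

Lemma vertex_eq S S' v u : vertex S n m v -> vertex S' n m u ->
  (v`_0 = u`_0 %[mod n])%Z -> (forall j, (0 < j <= m)%N -> v`_j = u`_j) -> v = u.
Proof.
move=> hv hu eq0 eq_mid.
have /vertexP[sv _ sumv] := hv; have /vertexP[su _ sumu] := hu.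
have eq_end j : (j < m.+2)%N -> is_end m j -> (v`_j = u`_j %[mod n])%Z -> v`_j = u`_j.
  by move=> jm endj eqj; rewrite -(vertex_reduce hv jm) -(vertex_reduce hu jm) /reduce endj.
have eq_last : (v`_m.+1 = u`_m.+1 %[mod n])%Z.
  have sum_split (w : seq int) :
      \sum_(j < m.+2) w`_j = w`_0 + (\sum_(j < m) w`_j.+1 + w`_m.+1).
    by rewrite big_ord_recr big_ord_recl addrA.
  have eq_sum : \sum_(j < m) v`_j.+1 = \sum_(j < m) u`_j.+1.
    by apply: eq_bigr => j _; apply: eq_mid; rewrite /= ltn_ord.
  move: sumv; rewrite -sumu !sum_split eq_sum -modzDml eq0 modzDml.
  by move/eqP; rewrite eqz_modDl eqz_modDl => /eqP.
apply: (@eq_from_nth _ 0); first by rewrite sv su.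
move=> j; rewrite sv => jm; case: (posnP j) => [-> | j_gt0]; first exact: eq_end.
have [jm1 | jm1] := ltnP j m.+1; first by apply: eq_mid; rewrite j_gt0.
have -> : j = m.+1 by apply/eqP; rewrite eqn_leq jm1 -ltnS jm.
by apply: eq_end => //; rewrite /is_end eqxx orbT.
Qed.

Definition canon (f : nat -> int) : seq int := mkseq (fun j => reduce j (f j)) m.+2.

Lemma size_canon f : size (canon f) = m.+2.
Proof. exact: size_mkseq. Qed.

Lemma nth_canon f j : (j < m.+2)%N -> (canon f)`_j = reduce j (f j).
Proof. exact: nth_mkseq. Qed.

Lemma sum_canon f : (\sum_(j < m.+2) (canon f)`_j = \sum_(j < m.+2) f j %[mod n])%Z.
Proof. by apply: modz_sum => j _; rewrite nth_canon // reduce_mod. Qed.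

Lemma canon_vertex (S : int -> bool) f : (0 < n)%N ->
  (forall j, (0 < j <= m)%N -> S (f j)) -> (\sum_(j < m.+2) f j = 0 %[mod n])%Z ->
  vertex S n m (canon f).
Proof.
move=> n_gt0 f_mid f_sum; apply/vertexP; split; first exact: size_canon.
  move=> j jm; rewrite nth_canon // /reduce; case mid: (is_end m j).
    by rewrite modz_ge0 ?ltz_pmod // lt0n_neq0.
  by apply: f_mid; move: mid; rewrite /is_end; lia.
by rewrite sum_canon.
Qed.

Lemma vsubE v u : vsub n m v u = canon (fun j => v`_j - u`_j).
Proof. by []. Qed.

Definition shift (w : seq int) (i : nat) (e : int) : seq int :=
  canon (fun j => w`_j + delta i e j).

Lemma nth_shift w i e j : (j < m.+2)%N -> (shift w i e)`_j = reduce j (w`_j + delta i e j).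
Proof. exact: nth_canon. Qed.

Lemma shift_nth0 w i e : ((shift w i e)`_0 = w`_0 + (if i == 0%N then e else 0) %[mod n])%Z.
Proof. by rewrite nth_shift // reduce_mod /delta [0%N == _]eq_sym subr0. Qed.

Lemma shiftK S w i e : vertex S n m w -> shift (shift w i e) i (- e) = w.
Proof.
move=> hw; have /vertexP[sw _ _] := hw.
apply: (@eq_from_nth _ 0); first by rewrite size_canon sw.
move=> j; rewrite size_canon => jm.
by rewrite !nth_shift // reduceDl deltaN addrK (vertex_reduce hw jm).
Qed.

Lemma vsub_shift y u i e : vsub n m (shift y i e) u = shift (vsub n m y u) i e.
Proof.
apply: (@eq_from_nth _ 0); first by rewrite vsubE !size_canon.
move=> j; rewrite vsubE size_canon => jm.
by rewrite nth_canon // !nth_shift // vsubE nth_canon // !reduceDl addrAC.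
Qed.

Lemma adjP S x y : adj S n m x y <->
  [/\ vertex S n m x, vertex S n m y &
      exists2 i, (i <= m)%N & exists2 e : int, e = 1 \/ e = -1 & x = shift y i e].
Proof.
split.
  case=> hx hy [i [im [x_eq [e [he [x_i x_i1]]]]]]; split=> //; exists i => //; exists e => //.
  have /vertexP[sx _ _] := hx.
  apply: (@eq_from_nth _ 0); first by rewrite size_canon sx.
  move=> j; rewrite sx => jm; rewrite nth_shift // -(vertex_reduce hx jm) /delta.
  case: (eqVneq j i) => [-> | ji].
    by rewrite (ltn_eqF (ltnSn i)) subr0; apply/eqP; rewrite -coord_eqE.
  case: (eqVneq j i.+1) => [-> | ji1]; first by rewrite sub0r; apply/eqP; rewrite -coord_eqE.
  by rewrite subrr addr0 x_eq.
case=> hx hy [i im [e he x_eq]]; subst x; split=> //; exists i; split=> //; split.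
  move=> j jm ji ji1; rewrite nth_shift // /delta (negPf ji) (negPf ji1) subrr addr0.
  exact: vertex_reduce hy jm.
exists e; split=> //; rewrite !coord_eqE !nth_shift ?ltnS ?(leqW im) // !reduce_idem /delta.
by rewrite eqxx (ltn_eqF (ltnSn i)) (gtn_eqF (ltnSn i)) eqxx subr0 add0r.
Qed.

Lemma adj_shift S y i e : vertex S n m y -> vertex S n m (shift y i e) ->
  (i <= m)%N -> e = 1 \/ e = -1 -> adj S n m y (shift y i e).
Proof.
move=> hy hy' im he; apply/adjP; split=> //; exists i => //; exists (- e).
  by case: he => ->; [right | left; rewrite opprK].
by rewrite (shiftK _ _ hy).
Qed.

Lemma shift_vertex (S : int -> bool) w i e : (0 < n)%N -> vertex S n m w -> (i <= m)%N ->
  i = 0%N \/ S (w`_i + e) -> i = m \/ S (w`_i.+1 - e) -> vertex S n m (shift w i e).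
Proof.
move=> n_gt0 /vertexP[_ w_coord w_sum] im left_i right_i.
apply: canon_vertex => // [j jm |]; last by rewrite big_split /= sum_delta // addr0.
have /w_coord : (j < m.+2)%N by lia.
rewrite is_endF // /delta; case: (eqVneq j i) => [ji | ji].
  by subst j; rewrite (ltn_eqF (ltnSn i)) subr0; case: left_i => // i0; rewrite i0 in jm.
case: (eqVneq j i.+1) => [ji1 | ji1]; last by rewrite subrr addr0.
by subst j; rewrite sub0r; case: right_i => // im'; rewrite im' ltnn andbF in jm.
Qed.

Lemma vsub_vertex v u : (0 < n)%N -> vertex SY n m v -> vertex SY n m u ->
  vertex SZ n m (vsub n m v u).
Proof.
move=> n_gt0 /vertexP[_ v_coord sumv] /vertexP[_ u_coord sumu].
rewrite vsubE; apply: canon_vertex => // [j jm |].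
  have jm2 : (j < m.+2)%N by lia.
  by move: (v_coord j jm2) (u_coord j jm2); rewrite is_endF // /SY /SZ; lia.
by rewrite sumrB -modzDml sumv modzDml add0r -modzNm sumu modzNm oppr0.
Qed.

Lemma vsub_id u : vsub n m u u = zero_vertex m.
Proof.
apply: (@eq_from_nth _ 0); first by rewrite vsubE size_canon size_nseq.
move=> j; rewrite vsubE size_canon => jm.
by rewrite nth_canon // nth_nseq jm subrr /reduce mod0z if_same.
Qed.

Lemma Yadj_vsub u x y : (0 < n)%N -> vertex SY n m u -> Yadj n m x y ->
  Zadj n m (vsub n m x u) (vsub n m y u).
Proof.
move=> n_gt0 hu /adjP[hx hy [i im [e he x_eq]]]; apply/adjP.
by split; try exact: vsub_vertex; exists i => //; exists e => //; rewrite x_eq vsub_shift.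
Qed.

Lemma walk_vsub u k x y : (0 < n)%N -> vertex SY n m u -> walk (Yadj n m) k x y ->
  walk (Zadj n m) k (vsub n m x u) (vsub n m y u).
Proof.
move=> n_gt0 hu; elim: k x => [|k IH] x /=; first by move->.
by case=> z [xz zy]; exists (vsub n m z u); split; [exact: Yadj_vsub | exact: IH].
Qed.

Definition cost (w : seq int) (t : int) : nat := (\sum_(l < m.+1) absz (flow w t l))%N.

Lemma flow_shift w i (e t : int) l : (i <= m)%N -> (l <= m)%N ->
  flow (shift w i e) (t + if i == 0%N then e else 0) l = flow w t l + if l == i then e else 0.
Proof.
move=> im; elim: l => [|l IH] lm; first by rewrite !flow0 eq_sym.
rewrite !flowS IH ?(ltnW lm) // nth_shift; last by rewrite !ltnS ltnW.
by rewrite /reduce is_endF ?lm // /delta eqSS; ring.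
Qed.

Lemma cost_shift w i (e t : int) : (i <= m)%N ->
  (cost (shift w i e) (t + if i == 0%N then e else 0)%R + absz (flow w t i))%N =
  (cost w t + absz (flow w t i + e)%R)%N.
Proof.
move=> im; have im1 : (i < m.+1)%N by [].
rewrite /cost (bigD1 (Ordinal im1)) // [in RHS](bigD1 (Ordinal im1)) //= flow_shift // eqxx.
rewrite (eq_bigr (fun l : 'I_m.+1 => absz (flow w t l))) => [|l /negPf li]; first lia.
by rewrite -val_eqE /= in li; rewrite flow_shift ?li ?addr0 // -ltnS.
Qed.

Lemma cost_zero_vertex : cost (zero_vertex m) 0 = 0%N.
Proof.
rewrite /cost big1 // => l _; rewrite /flow add0r big1 // => j _.
by rewrite nth_nseq if_same.
Qed.

Lemma walk_cost S k w z tz : (tz = z`_0 %[mod n])%Z -> walk (adj S n m) k w z ->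
  exists2 t, (t = w`_0 %[mod n])%Z & (cost w t <= cost z tz + k)%N.
Proof.
move=> tz_eq; elim: k w => [|k IH] w /=; first by move->; exists tz; rewrite ?addn0.
case=> y [/adjP[_ _ [i im [e he ->]]] /IH[t t_eq cost_y]].
exists (t + if i == 0%N then e else 0); first by rewrite shift_nth0 -modzDml t_eq modzDml.
by have := cost_shift y e t im; case: he => ->; lia.
Qed.

Lemma cost_eq0 w t : (cost w t == 0%N) = [forall l : 'I_m.+1, flow w t l == 0].
Proof. by rewrite /cost sum_nat_eq0; apply: eq_forallb => l; rewrite absz_eq0. Qed.

Lemma vertex_SY_mid w j : vertex SY n m w -> (0 < j <= m)%N -> w`_j = 0 \/ w`_j = 1.
Proof.
move=> /vertexP[_ w_coord _] jm; have /w_coord : (j < m.+2)%N by lia.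
by rewrite is_endF // /SY; lia.
Qed.

Lemma flow_vsubS v u t l : (l < m)%N ->
  flow (vsub n m v u) t l.+1 = flow (vsub n m v u) t l + (v`_l.+1 - u`_l.+1).
Proof. by move=> lm; rewrite flowS vsubE nth_canon ?ltnS 1?ltnW // /reduce is_endF. Qed.

Lemma vsub_cost_eq0 v u t : vertex SY n m v -> vertex SY n m u ->
  (t = (vsub n m v u)`_0 %[mod n])%Z -> cost (vsub n m v u) t = 0%N -> v = u.
Proof.
move=> hv hu t_eq /eqP; rewrite cost_eq0 => /forallP flow0_all.
have flow_eq0 l : (l <= m)%N -> flow (vsub n m v u) t l = 0.
  by rewrite -ltnS => lm; apply/eqP/(flow0_all (Ordinal lm)).
apply: (vertex_eq hv hu).
  move: t_eq; rewrite -(flow0 (vsub n m v u) t) flow_eq0 // vsubE nth_canon // modz_mod.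
  by rewrite mod0z => /esym/eqP; rewrite modz_sub_eq0 => /eqP.
case=> // j /andP[_ jm]; apply/eqP; rewrite -subr_eq0.
by have := flow_vsubS v u t jm; rewrite !flow_eq0 ?(ltnW jm) // add0r => <-.
Qed.

Lemma exists_lowering_move v u t : vertex SY n m v -> vertex SY n m u ->
  cost (vsub n m v u) t != 0%N ->
  exists i (e : int), [/\ (i <= m)%N, e = 1 \/ e = -1,
    i = 0%N \/ SY (v`_i + e), i = m \/ SY (v`_i.+1 - e) &
    (absz (flow (vsub n m v u) t i + e)).+1 = absz (flow (vsub n m v u) t i)].
Proof.
move=> hv hu; rewrite cost_eq0 negb_forall => /existsP[[l /=]]; rewrite ltnS => lm Fl.
set F := flow (vsub n m v u) t in Fl *.
have v01 j : (0 < j <= m)%N -> v`_j = 0 \/ v`_j = 1 by exact: vertex_SY_mid.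
have u01 j : (0 < j <= m)%N -> 0 <= u`_j <= 1 by move/(vertex_SY_mid hu); lia.
have FS j : (j < m)%N -> F j.+1 = F j + (v`_j.+1 - u`_j.+1) by exact: flow_vsubS.
case: (ltrgtP (F l) 0) => [Fneg | Fpos | F0]; last by rewrite F0 eqxx in Fl.
  (* F < 0: run the descent on the complements 1 - v, 1 - u and on - F. *)
  have [||||i [im Fi left_i right_i]] :=
    @exists_descent m (fun j => 1 - v`_j) (fun j => 1 - u`_j) (fun j => - F j) _ _ _ l lm.
  - by move=> j /v01; lia.
  - by move=> j /u01; lia.
  - by move=> j /FS; lia.
  - by rewrite oppr_gt0.
  exists i, 1; split=> //; [by left | | | lia].
    by case: left_i => [|v_i]; [left | right; rewrite (_ : v`_i = 0) //; lia].
  by case: right_i => [|v_i1]; [left | right; rewrite (_ : v`_i.+1 = 1) //; lia].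
have [i [im Fi left_i right_i]] :=
  @exists_descent m (fun j => v`_j) (fun j => u`_j) F v01 u01 FS l lm Fpos.
exists i, (-1); split=> //; [by right | | | lia].
  by case: left_i => [|->]; [left | right].
by case: right_i => [|->]; [left | right].
Qed.

Lemma walk_of_cost c v u t : (0 < n)%N -> vertex SY n m v -> vertex SY n m u ->
  (t = (vsub n m v u)`_0 %[mod n])%Z -> cost (vsub n m v u) t = c -> walk (Yadj n m) c v u.
Proof.
move=> n_gt0; elim: c v t => [|c IH] v t hv hu t_eq cost_c.
  exact: vsub_cost_eq0 t_eq cost_c.
have [|i [e [im he left_i right_i lower]]] := exists_lowering_move (t := t) hv hu.
  by rewrite cost_c.
have hv' := shift_vertex n_gt0 hv im left_i right_i.
exists (shift v i e); split; first exact: adj_shift.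
apply: (IH _ (t + if i == 0%N then e else 0)) => //.
  by rewrite vsub_shift shift_nth0 -modzDml t_eq modzDml.
by have := cost_shift (vsub n m v u) e t im; rewrite -vsub_shift cost_c -lower; lia.
Qed.

End Yoke.

Lemma is_dist_transfer (R R' : seq int -> seq int -> Prop) x y x' y' :
  (forall k, walk R k x y -> walk R' k x' y') ->
  (forall k, walk R' k x' y' -> exists2 k', (k' <= k)%N & walk R k' x y) ->
  forall d, is_dist R x y d <-> is_dist R' x' y' d.
Proof.
move=> to_R' to_R d; split=> [[walk_d min_d] | [walk_d min_d]].
  split=> [|k /to_R[k' k'k /min_d dk']]; [exact: to_R' | exact: leq_trans k'k].
have [k' k'd walk_k'] := to_R _ walk_d.
have d_eq : d = k' by apply/eqP; rewrite eqn_leq k'd andbT; exact: min_d (to_R' _ walk_k').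
by subst d; split=> // k /to_R'/min_d.
Qed.

Theorem lemma4p4 (n m : nat) (v u : seq int) :
  (1 <= n)%N -> vertex SY n m v -> vertex SY n m u ->
  vertex SZ n m (vsub n m v u) /\
  (forall d : nat, is_dist (Yadj n m) v u d <-> is_dist (Zadj n m) (vsub n m v u) (zero_vertex m) d).
Proof.
move=> n_gt0 hv hu; split; first exact: vsub_vertex.
apply: is_dist_transfer => k.
  by rewrite -(vsub_id n m u); exact: walk_vsub.
move=> walk_k; have [//|t t_eq cost_k] := @walk_cost n m SZ k _ (zero_vertex m) 0 _ walk_k.
exists (cost m (vsub n m v u) t); first by rewrite cost_zero_vertex in cost_k.
exact: walk_of_cost n_gt0 hv hu t_eq _.
Qed.
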